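(* Let $G$ be a connected graph and let $\mathcal T=(T,\mathcal X)$ be a tree-cut decomposition of $G$ of finite adhesion whose parts are exactly the $\omega$-edge blocks of $G$ and such that for every edge $t_1t_2\in E(T)$ there is an edge of $G$ between $X_{t_1}$ and $X_{t_2}$. Then the map $\varphi_{\mathcal T}:\Omega_E(G)\to\|T\|$ is a topological embedding. Moreover: (1) $\varphi_{\mathcal T}$ restricts to a bijection between the edge-ends of $G$ that are not edge-dominated by any vertex and the ends of $T$; (2) $\varphi_{\mathcal T}$ restricts to an injection from the edge-dominated edge-ends of $G$ into $V(T)$, and for each such edge-end $\omega$ the vertices in $X_{\varphi_{\mathcal T}(\omega)}$ are precisely the vertices of $G$ that edge-dominate $\omega$.
   Context: Rays are one-way infinite paths; two rays are edge-equivalent if no finite edge set separates them; the classes are edge-ends, forming $\Omega_E(G)$. For finite $F\subseteq E(G)$ and an edge-end $\omega$, $C(F,\omega)$ is the unique component of $G-F$ containing a tail of every ray in $\omega$. An edge-end $\omega$ is edge-dominated by a vertex $v$ if $v\in C(F,\omega)$ for every finite $F\subseteq E(G)$. A region of a graph $H$ is a connected induced subgraph $C$ with finite boundary $\partial C$; $\Omega_E(C)$ is the set of edge-ends having a ray in $C$, $\|C\|=V(C)\cup\Omega_E(C)$. The sets $\Omega_E(C)$ (resp. $\|C\|$) for regions $C$ form a basis of $\Omega_E(H)$ (resp. $\|H\|=V(H)\cup\Omega_E(H)$); for a tree $T$, $\Omega_E(T)$ is its usual end space $\Omega(T)$. The $\omega$-edge blocks of $G$ are the classes of the relation ''$x,y$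 cannot be separated by finitely many edges''. A tree-cut decomposition $(T,\mathcal X)$ is a tree $T$ with a partition $\mathcal X=\{X_t:t\in V(T)\}$ of $V(G)$ into nonempty parts; the adhesion set of $e=t_1t_2\in E(T)$ is $X_e=E_G(\bigcup_{t\in T_1}X_t,\bigcup_{t\in T_2}X_t)$ where $T_1\ni t_1,T_2\ni t_2$ are the components of $T-e$; finite adhesion means all $X_e$ finite. Definition of $\varphi_{\mathcal T}$: for an edge-end $\omega$ and $e\in E(T)$, since $X_e$ is finite, every ray of $\omega$ has a tail in $G[\bigcup_{t\in T_i}X_t]$ for the same unique $i\in\{1,2\}$; orient $e$ towards $T_i$. Then either all edges of $T$ are oriented towards a unique node $t$, or towards a unique end of $T$; $\varphi_{\mathcal T}(\omega)$ is this node or end. *)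

From Stdlib Require Import List Relations Arith.
Import ListNotations.
Set Implicit Arguments.

Section Graphs.
Context {V : Type}.

Definition is_graph (A : V -> V -> Prop) : Prop :=
  (forall u v, A u v -> A v u) /\ (forall u, ~ A u u).

(* Finite edge sets are given by finite lists of (unordered) pairs. *)
Definition inF (F : list (V * V)) (u v : V) : Prop := In (u, v) F \/ In (v, u) F.

Definition del (A : V -> V -> Prop) (F : list (V * V)) (u v : V) : Prop :=
  A u v /\ ~ inF F u v.

Definition conn (A : V -> V -> Prop) : V -> V -> Prop := clos_refl_trans V A.

Definition connected_graph (A : V -> V -> Prop) : Prop := forall x y, conn A x y.

(* A tree: connected graph in which every edge is a bridge (i.e. acyclic). *)
Definition is_tree (A : V -> V -> Prop) : Prop :=
  is_graph A /\ connected_graph A /\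
  (forall t1 t2, A t1 t2 -> ~ conn (del A [(t1, t2)]) t1 t2).

Definition is_ray (A : V -> V -> Prop) (r : nat -> V) : Prop :=
  (forall i j, r i = r j -> i = j) /\ (forall n, A (r n) (r (S n))).

Definition tail_in (r : nat -> V) (S : V -> Prop) : Prop :=
  exists n0, forall n, n0 <= n -> S (r n).

Definition edge_equiv (A : V -> V -> Prop) (r s : nat -> V) : Prop :=
  forall F : list (V * V), exists n m, forall i j, n <= i -> m <= j ->
    conn (del A F) (r i) (s j).

Definition edge_dominates (A : V -> V -> Prop) (v : V) (r : nat -> V) : Prop :=
  forall F : list (V * V), exists n, forall i, n <= i -> conn (del A F) v (r i).

Definition edge_dominated (A : V -> V -> Prop) (r : nat -> V) : Prop :=
  exists v, edge_dominates A v r.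

Definition insep (A : V -> V -> Prop) (x y : V) : Prop :=
  forall F : list (V * V), conn (del A F) x y.

Definition region (A : V -> V -> Prop) (C : V -> Prop) : Prop :=
  (exists x, C x) /\
  (forall x y, C x -> C y -> conn (fun u v => A u v /\ C u /\ C v) x y) /\
  (exists L : list (V * V), forall u v, A u v -> C u -> ~ C v -> inF L u v).

Definition in_OmegaE (A : V -> V -> Prop) (C : V -> Prop) (r : nat -> V) : Prop :=
  exists s, is_ray A s /\ edge_equiv A r s /\ forall n, C (s n).

End Graphs.

(* Points of ||T|| = V(T) u Omega_E(T): a node, or an end represented by a ray. *)
Inductive tpoint (N : Type) : Type :=
| TNode : N -> tpoint N
| TEnd : (nat -> N) -> tpoint N.
Arguments TNode {N} _.
Arguments TEnd {N} _.

Definition in_norm {N} (TA : N -> N -> Prop) (D : N -> Prop) (p : tpoint N) : Prop :=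
  match p with
  | TNode t => D t
  | TEnd s => in_OmegaE TA D s
  end.

(* equality of points of ||T|| (ends are classes of rays) *)
Definition peq {N} (TA : N -> N -> Prop) (p q : tpoint N) : Prop :=
  match p, q with
  | TNode a, TNode b => a = b
  | TEnd s, TEnd s' => edge_equiv TA s s'
  | _, _ => False
  end.

Definition side {N} (TA : N -> N -> Prop) (t1 t2 u : N) : N -> Prop :=
  conn (del TA [(t1, t2)]) u.

(* Tree-cut decomposition given by the part map part : V(G) -> V(T)
   (X_t = part^{-1}(t)), with all parts nonempty. *)
Definition tree_cut_decomposition {V N} (TA : N -> N -> Prop) (part : V -> N) : Prop :=
  is_tree TA /\ forall t, exists v, part v = t.

Definition finite_adhesion {V N} (GA : V -> V -> Prop) (TA : N -> N -> Prop)
  (part : V -> N) : Prop :=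
  forall t1 t2, TA t1 t2 ->
    exists L : list (V * V), forall u v, GA u v ->
      side TA t1 t2 t1 (part u) -> side TA t1 t2 t2 (part v) -> inF L u v.

(* phi_T(omega) = p, omega represented by a ray r of G:
   every edge t1t2 of T is oriented towards the side containing p. *)
Definition phi {V N} (GA : V -> V -> Prop) (TA : N -> N -> Prop) (part : V -> N)
  (r : nat -> V) (p : tpoint N) : Prop :=
  match p with
  | TNode t => forall t1 t2, TA t1 t2 ->
      tail_in r (fun v => side TA t1 t2 t (part v))
  | TEnd s => is_ray TA s /\
      forall t1 t2, TA t1 t2 -> forall u, tail_in s (side TA t1 t2 u) ->
        tail_in r (fun v => side TA t1 t2 u (part v))
  end.

(* phi is a well-defined map Omega_E(G) -> ||T|| which is a topological embedding,
   where Omega_E(G) and ||T|| carry the topologies generated by the bases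
   { Omega_E(C) : C region of G } and { ||D|| : D region of T }. *)
Definition topological_embedding {V N} (GA : V -> V -> Prop) (TA : N -> N -> Prop)
  (f : (nat -> V) -> tpoint N -> Prop) : Prop :=
  (forall r, is_ray GA r -> exists p, f r p) /\
  (forall r r' p p', is_ray GA r -> is_ray GA r' -> edge_equiv GA r r' ->
     f r p -> f r' p' -> peq TA p p') /\
  (forall r r' p p', is_ray GA r -> is_ray GA r' -> f r p -> f r' p' ->
     peq TA p p' -> edge_equiv GA r r') /\
  (forall r p, is_ray GA r -> f r p -> forall D, region TA D -> in_norm TA D p ->
     exists C, region GA C /\ in_OmegaE GA C r /\
       forall r' p', is_ray GA r' -> in_OmegaE GA C r' -> f r' p' -> in_norm TA D p') /\
  (forall r p, is_ray GA r -> f r p -> forall C, region GA C -> in_OmegaE GA C r ->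
     exists D, region TA D /\ in_norm TA D p /\
       forall r' p', is_ray GA r' -> f r' p' -> in_norm TA D p' -> in_OmegaE GA C r').

(* Since every adhesion set is finite, a ray of G has a tail on one side of each edge of T, and
   these choices orient T.  If the orientation has a sink t, the ray is sent to t; otherwise
   following the orientation from any node produces a ray of T, whose end is the image.

   The key converse fact: if F is a finite set of edges of G and D is a subtree of T meeting the
   parts of the endpoints of F in at most one node, then G - F is connected over D, because parts
   are edge-blocks and every edge of T is realized by an edge of G.  Cutting off finitely many
   tree edges around a node t, this shows that every vertex of X_t edge-dominates each ray sent
   to t and that all such rays are equivalent; a half-tree far along an end of T gives
   injectivity on ends, and both give openness.  In the other direction, a path of G avoiding the
   adhesion sets of the finitely many boundary edges of a subtree stays over that subtree, which
   gives continuity and places dominating vertices in the image part.  Finally, an end of T is the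
   image of the ray obtained by concatenating, part by part, paths between the edges of G that
   realize consecutive tree edges; such a ray converges to an end, so it is not dominated. *)

From Stdlib Require Import List Relations Arith Lia Classical ClassicalEpsilon.
Import ListNotations.

Section Relations.
Context {X : Type}.
Implicit Types (R S : X -> X -> Prop) (F : list (X * X)).

Lemma conn_refl R x : conn R x x.
Proof. apply rt_refl. Qed.

Lemma conn_step R x y : R x y -> conn R x y.
Proof. apply rt_step. Qed.

Lemma conn_trans R x y z : conn R x y -> conn R y z -> conn R x z.
Proof. apply rt_trans. Qed.

Lemma conn_mono R S : (forall x y, R x y -> S x y) -> forall x y, conn R x y -> conn S x y.
Proof. intros H x y Hc; induction Hc; eauto using conn_step, conn_refl, conn_trans. Qed.

Lemma conn_sym R : (forall x y, R x y -> R y x) -> forall x y, conn R x y -> conn R y x.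
Proof. intros H x y Hc; induction Hc; eauto using conn_step, conn_refl, conn_trans. Qed.

Lemma conn_path R (f : nat -> X) i j :
  (forall k, i <= k < j -> R (f k) (f (S k))) -> i <= j -> conn R (f i) (f j).
Proof.
  intros H Hij; induction Hij; [apply conn_refl|].
  apply conn_trans with (f m); [apply IHHij; intros; apply H; lia | apply conn_step, H; lia].
Qed.

Lemma conn_within R c x :
  conn R c x -> conn (fun p q => R p q /\ conn R c p /\ conn R c q) c x.
Proof.
  intro H; induction (clos_rt_rtn1 _ _ _ _ H) as [|y z Hyz Hcy IH]; [apply conn_refl|].
  assert (Hy : conn R c y) by (apply clos_rtn1_rt; exact Hcy).
  apply conn_trans with y; [exact (IH Hy)|].
  apply conn_step; repeat split; eauto using conn_trans, conn_step.
Qed.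

Lemma conn_simple_path R x y : conn R x y -> exists (len : nat) (f : nat -> X),
  f 0 = x /\ f len = y /\ (forall i, i < len -> R (f i) (f (S i))) /\
  (forall i j, i <= len -> j <= len -> f i = f j -> i = j).
Proof.
  intro H; induction (clos_rt_rtn1 _ _ _ _ H) as [|y z Hyz Hxy IH].
  - exists 0, (fun _ => x); repeat split; intros; lia.
  - destruct IH as (len & f & H0 & Hl & Hs & Hi); [apply clos_rtn1_rt; exact Hxy|].
    destruct (classic (exists j, j <= len /\ f j = z)) as [(j & Hj & Hfj)|Hnew].
    + exists j, f; repeat split; auto.
      * intros i Hij; apply Hs; lia.
      * intros i k Hi' Hk'; apply Hi; lia.
    + exists (S len), (fun i => if i <=? len then f i else z); repeat split.
      * exact H0.
      * rewrite (proj2 (Nat.leb_gt _ _) (Nat.lt_succ_diag_r len)); reflexivity.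
      * intros i Hil; rewrite (proj2 (Nat.leb_le i len)) by lia.
        destruct (Nat.leb_spec (S i) len); [apply Hs; lia|].
        replace i with len by lia; rewrite Hl; exact Hyz.
      * intros i j Hi1 Hj1.
        destruct (Nat.leb_spec i len), (Nat.leb_spec j len); intro E;
          [apply Hi; auto | exfalso; apply Hnew; eauto | exfalso; apply Hnew; eauto | lia].
Qed.

Inductive walk R : nat -> X -> X -> Prop :=
| walk_nil x : walk R 0 x x
| walk_cons n x y z : R x y -> walk R n y z -> walk R (S n) x z.

Lemma conn_walk R x y : conn R x y -> exists n, walk R n x y.
Proof.
  intro H; apply clos_rt_rt1n in H; induction H as [|x y z Hxy _ [n Hn]].
  - exists 0; constructor.
  - exists (S n); econstructor; eauto.
Qed.

Lemma walk_snoc R n x a : walk R (S n) x a -> exists c, walk R n x c /\ R c a.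
Proof.
  revert x; induction n as [|n IH]; intros x H; inversion H as [|? ? y ? Hxy Hw]; subst.
  - inversion Hw; subst; exists x; split; [constructor | exact Hxy].
  - destruct (IH y Hw) as (c & ? & ?); exists c; split; [econstructor; eauto | assumption].
Qed.

Lemma inF_sym F u v : inF F u v -> inF F v u.
Proof. unfold inF; tauto. Qed.

Lemma inF_In F a b : In (a, b) F -> inF F a b.
Proof. unfold inF; tauto. Qed.

Lemma inF_app_l F F' u v : inF F u v -> inF (F ++ F') u v.
Proof. unfold inF; rewrite !in_app_iff; tauto. Qed.

Lemma inF_app_r F F' u v : inF F' u v -> inF (F ++ F') u v.
Proof. unfold inF; rewrite !in_app_iff; tauto. Qed.

Lemma inF_cons (a b : X) F u v :
  inF ((a, b) :: F) u v -> (u = a /\ v = b) \/ (u = b /\ v = a) \/ inF F u v.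
Proof. unfold inF; simpl; intros [[H|H]|[H|H]]; try (inversion H; subst); tauto. Qed.

Lemma inF_single (a b u v : X) : inF [(a, b)] u v -> (u = a /\ v = b) \/ (u = b /\ v = a).
Proof. intro H; apply inF_cons in H as [?|[?|[[]|[]]]]; tauto. Qed.

Definition endpoints F : list X := flat_map (fun e => [fst e; snd e]) F.

Lemma endpoints_inF F u v : inF F u v -> In u (endpoints F).
Proof. unfold endpoints; intros [H|H]; apply in_flat_map; eexists; split; eauto; simpl; auto. Qed.

Lemma del_sub A F u v : del A F u v -> A u v.
Proof. intros [H _]; exact H. Qed.

Lemma del_sym A F : (forall u v, A u v -> A v u) -> forall u v, del A F u v -> del A F v u.
Proof. intros H u v [H1 H2]; split; auto using inF_sym. Qed.

Lemma del_antimono A F F' :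
  (forall u v, inF F u v -> inF F' u v) -> forall u v, del A F' u v -> del A F u v.
Proof. intros H u v [H1 H2]; split; auto. Qed.

Lemma component_region A F c : (forall u v, A u v -> A v u) -> region A (conn (del A F) c).
Proof.
  intro Hsym; split; [exists c; apply conn_refl|split].
  - set (I := fun p q => A p q /\ conn (del A F) c p /\ conn (del A F) c q).
    assert (HI : forall z, conn (del A F) c z -> conn I c z).
    { intros z Hz; eapply conn_mono; [|exact (conn_within _ _ _ Hz)].
      intros p q [H1 H2]; split; [exact (del_sub _ _ _ _ H1) | exact H2]. }
    intros x y Hx Hy; apply conn_trans with c; [|auto].
    apply conn_sym; [|auto]; intros p q (? & ? & ?); repeat split; auto.
  - exists F; intros u v Huv Hu Hv; apply NNPP; intro Hn.
    apply Hv, conn_trans with u; [exact Hu | apply conn_step; split; assumption].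
Qed.

Lemma component_side A F c q a b : ~ conn (del A F) c a -> ~ conn (del A F) c b ->
  conn (del A F) c q -> conn (del A [(a, b)]) c q.
Proof.
  intros Ha Hb H; induction (clos_rt_rtn1 _ _ _ _ H) as [|y z Hyz Hcy IH]; [apply conn_refl|].
  assert (Hy : conn (del A F) c y) by (apply clos_rtn1_rt; exact Hcy).
  apply conn_trans with y; [exact (IH Hy)|].
  apply conn_step; split; [exact (del_sub _ _ _ _ Hyz)|].
  intro Hin; apply inF_single in Hin as [[-> _]|[-> _]]; contradiction.
Qed.

Lemma conn_del_boundary A (C : X -> Prop) F x y : (forall u v, A u v -> C u -> ~ C v -> inF F u v) ->
  C x -> conn (del A F) x y -> C y.
Proof.
  intros HL Hx H; induction H as [x y [Hxy Hn]| |]; auto.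
  apply NNPP; intro Hy; exact (Hn (HL x y Hxy Hx Hy)).
Qed.

Lemma tail_mono (r : nat -> X) (P Q : X -> Prop) :
  (forall v, P v -> Q v) -> tail_in r P -> tail_in r Q.
Proof. intros H [n Hn]; exists n; auto. Qed.

Lemma tail_common (r : nat -> X) (P Q : X -> Prop) : tail_in r P -> tail_in r Q -> exists v, P v /\ Q v.
Proof. intros [n1 H1] [n2 H2]; exists (r (n1 + n2)); split; [apply H1 | apply H2]; lia. Qed.

Lemma ray_eventually_avoids (r : nat -> X) :
  (forall i j, r i = r j -> i = j) -> forall a, exists n, forall i, n <= i -> r i <> a.
Proof.
  intros Hi a; destruct (classic (exists i, r i = a)) as [[i <-]|Hn].
  - exists (S i); intros j Hj E; apply Hi in E; lia.
  - exists 0; intros j _ E; apply Hn; eauto.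
Qed.

Lemma ray_eventually_avoids_edges (r : nat -> X) : (forall i j, r i = r j -> i = j) ->
  forall F, exists n, forall i, n <= i -> ~ inF F (r i) (r (S i)).
Proof.
  intros Hi F; induction F as [|[a b] F [n Hn]]; [exists 0; intros i _ [[]|[]]|].
  destruct (ray_eventually_avoids r Hi a) as [na Ha], (ray_eventually_avoids r Hi b) as [nb Hb].
  exists (n + na + nb); intros i Hil Hin.
  apply inF_cons in Hin as [[E _]|[[E _]|Hin]]; [apply (Ha i) | apply (Hb i) | apply (Hn i)]; auto; lia.
Qed.

Lemma ray_tail_conn A (r : nat -> X) : (forall u v, A u v -> A v u) -> is_ray A r ->
  forall F, exists n, forall i j, n <= i -> n <= j -> conn (del A F) (r i) (r j).
Proof.
  intros Hsym [Hi Hs] F; destruct (ray_eventually_avoids_edges r Hi F) as [n Hn]; exists n.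
  assert (Hfw : forall i j, n <= i -> i <= j -> conn (del A F) (r i) (r j)).
  { intros i j Hni Hij; apply conn_path; [intros k Hk; split; [apply Hs | apply Hn; lia] | exact Hij]. }
  intros i j Hi' Hj'; destruct (Nat.le_ge_cases i j); [auto|].
  apply conn_sym; [apply del_sym, Hsym | auto].
Qed.

Lemma edge_equiv_refl A (r : nat -> X) :
  (forall u v, A u v -> A v u) -> is_ray A r -> edge_equiv A r r.
Proof. intros Hsym Hr F; destruct (ray_tail_conn A r Hsym Hr F) as [n Hn]; exists n, n; exact Hn. Qed.

Lemma edge_equiv_sym A (r s : nat -> X) :
  (forall u v, A u v -> A v u) -> edge_equiv A r s -> edge_equiv A s r.
Proof.
  intros Hsym H F; destruct (H F) as (n & m & Hnm); exists m, n.
  intros i j Hi Hj; apply conn_sym; [apply del_sym, Hsym | auto].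
Qed.

Lemma ray_shift A (r : nat -> X) k : is_ray A r -> is_ray A (fun n => r (k + n)).
Proof.
  intros [Hi Hs]; split; [intros i j E; apply Hi in E; lia|].
  intro n; rewrite Nat.add_succ_r; apply Hs.
Qed.

Lemma edge_equiv_shift A (r : nat -> X) k :
  (forall u v, A u v -> A v u) -> is_ray A r -> edge_equiv A r (fun n => r (k + n)).
Proof.
  intros Hsym Hr F; destruct (ray_tail_conn A r Hsym Hr F) as [n Hn]; exists n, n.
  intros i j Hi Hj; apply Hn; lia.
Qed.

Lemma tail_in_OmegaE A (C : X -> Prop) (r : nat -> X) :
  (forall u v, A u v -> A v u) -> is_ray A r -> tail_in r C -> in_OmegaE A C r.
Proof.
  intros Hsym Hr [k Hk]; exists (fun n => r (k + n)).
  split; [apply ray_shift, Hr | split; [apply edge_equiv_shift; assumption | intro n; apply Hk; lia]].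
Qed.

Lemma eventually_on_list (Q : X -> X -> Prop) (P : X -> X -> nat -> Prop) F :
  (forall a b, Q a b -> exists n, forall i, n <= i -> P a b i) ->
  exists n, forall a b, Q a b -> inF F a b -> forall i, n <= i -> P a b i.
Proof.
  intro H; induction F as [|[x y] F [n Hn]]; [exists 0; intros a b _ [[]|[]]|].
  assert (Hev : forall a b, exists m, Q a b -> forall i, m <= i -> P a b i).
  { intros a b; destruct (classic (Q a b)) as [Hq|Hq];
      [destruct (H a b Hq) as [m Hm]; exists m | exists 0]; tauto. }
  destruct (Hev x y) as [mx Hx], (Hev y x) as [my Hy]; exists (n + mx + my).
  intros a b Hq Hin i Hi; apply inF_cons in Hin as [[-> ->]|[[-> ->]|Hin]];
    [apply Hx | apply Hy | apply Hn]; auto; lia.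
Qed.

End Relations.

Definition concat_step (len : nat -> nat) (ki : nat * nat) : nat * nat :=
  if snd ki <? len (fst ki) then (fst ki, S (snd ki)) else (S (fst ki), 0).

(* Enumerates the pairs [(k, i)] with [i <= len k] in lexicographic order. *)
Definition concat_index (len : nat -> nat) (n : nat) : nat * nat :=
  Nat.iter n (concat_step len) (0, 0).

Definition lex_lt (p q : nat * nat) : Prop := fst p < fst q \/ (fst p = fst q /\ snd p < snd q).

Section Concatenation.
Variable len : nat -> nat.
Notation idx := (concat_index len).

Lemma concat_index_succ n : idx (S n) = concat_step len (idx n).
Proof. reflexivity. Qed.

Lemma concat_index_bound n : snd (idx n) <= len (fst (idx n)).
Proof.
  induction n as [|n IH]; [simpl; lia|]; rewrite concat_index_succ; unfold concat_step.
  destruct (Nat.ltb_spec (snd (idx n)) (len (fst (idx n)))); simpl; lia.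
Qed.

Lemma concat_index_lex n m : n < m -> lex_lt (idx n) (idx m).
Proof.
  assert (Hstep : forall n, lex_lt (idx n) (idx (S n))).
  { intro k; rewrite concat_index_succ; unfold concat_step, lex_lt.
    destruct (snd (idx k) <? len (fst (idx k))); simpl; lia. }
  induction 1 as [|m _ IH]; [apply Hstep|]; pose proof (Hstep m); unfold lex_lt in *; lia.
Qed.

Lemma concat_index_block_start k : exists n, idx n = (k, 0).
Proof.
  induction k as [|k [n Hn]]; [exists 0; reflexivity|].
  assert (Hwalk : forall d, d <= len k -> idx (n + d) = (k, d)).
  { induction d as [|d IH]; intro Hd; [rewrite Nat.add_0_r; exact Hn|].
    rewrite Nat.add_succ_r, concat_index_succ, IH by lia; unfold concat_step; simpl.
    rewrite (proj2 (Nat.ltb_lt _ _)) by lia; reflexivity. }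
  exists (S (n + len k)); rewrite concat_index_succ, Hwalk by lia; unfold concat_step; simpl.
  rewrite Nat.ltb_irrefl; reflexivity.
Qed.

Lemma concat_index_eventually K : exists n0, forall n, n0 <= n -> K <= fst (idx n).
Proof.
  destruct (concat_index_block_start K) as [n0 Hn0]; exists n0; intros n Hn.
  destruct (Nat.eq_dec n0 n) as [<-|Hne]; [rewrite Hn0; simpl; lia|].
  pose proof (concat_index_lex n0 n ltac:(lia)) as H; rewrite Hn0 in H.
  unfold lex_lt in H; simpl in H; lia.
Qed.
End Concatenation.

Lemma concat_paths {X : Type} (R : X -> X -> Prop) (len : nat -> nat) (P : nat -> nat -> X) :
  (forall k i, i < len k -> R (P k i) (P k (S i))) ->
  (forall k, R (P k (len k)) (P (S k) 0)) ->
  (forall k l i j, i <= len k -> j <= len l -> P k i = P l j -> k = l /\ i = j) ->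
  exists r, is_ray R r /\
    forall K, exists n0, forall n, n0 <= n -> exists k i, K <= k /\ i <= len k /\ r n = P k i.
Proof.
  intros Hin Hjoin Hinj.
  exists (fun n => P (fst (concat_index len n)) (snd (concat_index len n))); split; [split|].
  - intros n m E.
    destruct (Hinj _ _ _ _ (concat_index_bound len n) (concat_index_bound len m) E) as [E1 E2].
    destruct (lt_eq_lt_dec n m) as [[H|H]|H]; [exfalso| exact H |exfalso];
      pose proof (concat_index_lex len _ _ H) as L; unfold lex_lt in L; lia.
  - intro n; rewrite concat_index_succ; unfold concat_step.
    pose proof (concat_index_bound len n) as Hb.
    destruct (Nat.ltb_spec (snd (concat_index len n)) (len (fst (concat_index len n)))); simpl.
    + apply Hin; assumption.
    + replace (snd (concat_index len n)) with (len (fst (concat_index len n))) by lia; apply Hjoin.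
  - intro K; destruct (concat_index_eventually len K) as [n0 Hn0]; exists n0; intros n Hn.
    exists (fst (concat_index len n)), (snd (concat_index len n)).
    split; [apply Hn0, Hn | split; [apply concat_index_bound | reflexivity]].
Qed.

Section Tree.
Context {N : Type} (TA : N -> N -> Prop) (HT : is_tree TA).

Lemma TA_sym a b : TA a b -> TA b a.
Proof. exact (proj1 (proj1 HT) a b). Qed.

Lemma TA_irrefl a : ~ TA a a.
Proof. exact (proj2 (proj1 HT) a). Qed.

Lemma tree_conn x y : conn TA x y.
Proof. exact (proj1 (proj2 HT) x y). Qed.

Lemma side_bridge a b : TA a b -> ~ side TA a b a b.
Proof. exact (proj2 (proj2 HT) a b). Qed.

Lemma side_swap a b u x : side TA a b u x -> side TA b a u x.
Proof.
  apply conn_mono, del_antimono; intros x' y' H.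
  apply inF_single in H as [[-> ->]|[-> ->]]; unfold inF; simpl; tauto.
Qed.

Lemma side_sym a b u x : side TA a b u x -> side TA a b x u.
Proof. apply conn_sym, del_sym, TA_sym. Qed.

Lemma side_step a b x y : TA x y -> ~ inF [(a, b)] x y -> side TA a b x y.
Proof. intros; apply conn_step; split; assumption. Qed.

Lemma side_cases a b x : TA a b -> side TA a b a x \/ side TA a b b x.
Proof.
  intro Hab; induction (clos_rt_rtn1 _ _ _ _ (tree_conn a x)) as [|y z Hyz _ IH];
    [left; apply conn_refl|].
  destruct (classic (inF [(a, b)] y z)) as [Hin|Hin].
  - apply inF_single in Hin as [[-> ->]|[-> ->]]; [right | left]; apply conn_refl.
  - destruct IH as [IH|IH]; [left|right]; eapply conn_trans; eauto; apply side_step; assumption.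
Qed.

Lemma side_disjoint a b x : TA a b -> side TA a b a x -> side TA a b b x -> False.
Proof.
  intros Hab Ha Hb; apply (side_bridge a b Hab), conn_trans with x; [|apply side_sym]; assumption.
Qed.

Lemma side_crossing_edge a b x y : TA a b -> side TA a b a x -> side TA a b b y -> TA x y ->
  x = a /\ y = b.
Proof.
  intros Hab Hx Hy Hxy; destruct (classic (inF [(a, b)] x y)) as [Hin|Hin].
  - apply inF_single in Hin as [[-> ->]|[-> ->]]; [tauto|].
    exfalso; exact (side_bridge a b Hab Hx).
  - exfalso; apply (side_disjoint a b y Hab); [|exact Hy].
    apply conn_trans with x; [exact Hx | apply side_step; assumption].
Qed.

Lemma conn_crossing (R : N -> N -> Prop) a b x y : (forall u v, R u v -> TA u v) -> TA a b ->
  conn R x y -> side TA a b a x -> side TA a b b y -> conn R x a /\ conn R b y.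
Proof.
  intros HR Hab H; apply clos_rt_rt1n in H; induction H as [x|x y z Hxy Hyz IH]; intros Hx Hz.
  - exfalso; exact (side_disjoint a b x Hab Hx Hz).
  - destruct (side_cases a b y Hab) as [Hy|Hy].
    + destruct (IH Hy Hz); split; [apply conn_trans with y; [apply conn_step|]|]; assumption.
    + destruct (side_crossing_edge a b x y Hab Hx Hy (HR _ _ Hxy)) as [-> ->].
      split; [apply conn_refl | apply clos_rt1n_rt; exact Hyz].
Qed.

Lemma walk_crossing a b m x y : TA a b -> walk TA m x y -> side TA a b a x -> side TA a b b y ->
  exists m1 m2, m1 < m /\ m2 < m /\ walk TA m1 x a /\ walk TA m2 b y.
Proof.
  intros Hab H; induction H as [x|n x y z Hxy Hw IH]; intros Hx Hz.
  - exfalso; exact (side_disjoint a b x Hab Hx Hz).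
  - destruct (side_cases a b y Hab) as [Hy|Hy].
    + destruct (IH Hy Hz) as (m1 & m2 & ? & ? & ? & ?).
      exists (S m1), m2; repeat split; try lia; [econstructor|]; eauto.
    + destruct (side_crossing_edge a b x y Hab Hx Hy Hxy) as [-> ->].
      exists 0, n; repeat split; try lia; [constructor | assumption].
Qed.

Lemma separating_edge t t' : t <> t' -> exists a b, TA a b /\ side TA a b a t /\ side TA a b b t'.
Proof.
  intro Hne; destruct (conn_walk _ _ _ (tree_conn t t')) as [m Hm]; revert t Hne Hm.
  induction m as [m IH] using lt_wf_ind; intros t Hne Hm; inversion Hm as [|n ? y ? Hty Hw]; subst;
    [tauto|].
  destruct (side_cases t y t' Hty) as [Hs|Hs].
  - destruct (walk_crossing y t n y t' (TA_sym _ _ Hty) Hw) as (m1 & m2 & _ & ? & _ & ?);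
      [apply conn_refl | apply side_swap; exact Hs|].
    apply (IH m2); auto; lia.
  - exists t, y; repeat split; [exact Hty | apply conn_refl | exact Hs].
Qed.

Lemma separating_edge_in F x y : ~ conn (del TA F) x y ->
  exists a b, TA a b /\ inF F a b /\ side TA a b a x /\ side TA a b b y.
Proof.
  intro Hne; destruct (conn_walk _ _ _ (tree_conn x y)) as [m Hm]; revert x Hne Hm.
  induction m as [m IH] using lt_wf_ind; intros x Hne Hm; inversion Hm as [|n ? x' ? Hxx' Hw]; subst;
    [exfalso; apply Hne, conn_refl|].
  destruct (classic (inF F x x')) as [HF|HF].
  - destruct (side_cases x x' y Hxx') as [Hs|Hs].
    + destruct (walk_crossing x' x n x' y (TA_sym _ _ Hxx') Hw) as (m1 & m2 & _ & ? & _ & ?);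
        [apply conn_refl | apply side_swap; exact Hs|].
      apply (IH m2); auto; lia.
    + exists x, x'; repeat split; [exact Hxx' | exact HF | apply conn_refl | exact Hs].
  - destruct (IH n (Nat.lt_succ_diag_r n) x') as (a & b & Hab & Hin & Ha & Hb); [|exact Hw|].
    + intro C; apply Hne, conn_trans with x'; [apply conn_step; split|]; assumption.
    + exists a, b; repeat split; try assumption.
      apply conn_trans with x'; [exact Ha|]; apply side_sym, side_step; [exact Hxx'|].
      intro Hi; apply inF_single in Hi as [[-> ->]|[-> ->]]; [apply HF | apply HF, inF_sym]; exact Hin.
Qed.

Lemma no_descending_walk (s : nat -> N) b n0 : (forall n, TA (s n) (s (S n))) ->
  ~ (forall n, n0 <= n -> side TA (s n) (s (S n)) (s (S n)) b).
Proof.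
  intros Hs Hb; destruct (conn_walk _ _ _ (tree_conn (s n0) b)) as [m Hm].
  revert n0 Hb Hm; induction m as [m IH] using lt_wf_ind; intros n0 Hb Hm.
  destruct (walk_crossing (s n0) (s (S n0)) m (s n0) b (Hs n0) Hm) as (m1 & m2 & _ & ? & _ & ?);
    [apply conn_refl | apply Hb; lia |].
  apply (IH m2 ltac:(assumption) (S n0)); [intros; apply Hb; lia | assumption].
Qed.

Lemma tree_ray_side s a b : is_ray TA s -> TA a b ->
  tail_in s (side TA a b a) \/ tail_in s (side TA a b b).
Proof.
  intros Hs Hab; destruct (ray_tail_conn TA s TA_sym Hs [(a, b)]) as [n Hn].
  destruct (side_cases a b (s n) Hab) as [H|H]; [left|right]; exists n; intros i Hi;
    apply conn_trans with (s n); [exact H | apply Hn; lia | exact H | apply Hn; lia].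
Qed.

Lemma ray_nonbacktracking s : is_ray TA s -> forall n, s (S (S n)) <> s n.
Proof. intros [Hi _] n E; apply Hi in E; lia. Qed.

Section HalfTrees.
Variable s : nat -> N.
Hypothesis s_step : forall n, TA (s n) (s (S n)).
Hypothesis s_nonbacktracking : forall n, s (S (S n)) <> s n.

Definition half n : N -> Prop := side TA (s n) (s (S n)) (s (S n)).

Lemma half_next n : half n (s (S (S n))).
Proof.
  apply side_step; [apply s_step|]; intro Hi; apply inF_single in Hi as [[E _]|[_ E]].
  - pose proof (s_step n) as H; rewrite E in H; exact (TA_irrefl _ H).
  - exact (s_nonbacktracking n E).
Qed.

Lemma half_excludes_start n : ~ half n (s n).
Proof. intro H; exact (side_disjoint _ _ _ (s_step n) (conn_refl _ _) H). Qed.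

Lemma half_succ n x : half (S n) x -> half n x.
Proof.
  intro Hx; apply conn_trans with (s (S (S n))); [apply half_next|].
  assert (Hnot : ~ half (S n) (s n)).
  { intro Hc; apply (half_excludes_start (S n)), conn_trans with (s n); [exact Hc|].
    apply side_step; [apply s_step|].
    intro Hi; apply inF_single in Hi as [[E _]|[E _]]; [|exact (s_nonbacktracking n (eq_sym E))].
    pose proof (s_step n) as H; rewrite <- E in H; exact (TA_irrefl _ H). }
  exact (component_side _ _ _ _ _ _ Hnot (half_excludes_start (S n)) Hx).
Qed.

Lemma half_antitone n m x : n <= m -> half m x -> half n x.
Proof. induction 1; auto using half_succ. Qed.

Lemma half_contains_walk n m : n < m -> half n (s m).
Proof.
  induction 1 as [|m Hm IH]; [apply conn_refl|].
  destruct m as [|m]; [lia|]; apply half_antitone with m; [lia | apply half_next].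
Qed.

Lemma nonbacktracking_injective i j : s i = s j -> i = j.
Proof.
  intro E; destruct (lt_eq_lt_dec i j) as [[H|H]|H]; [exfalso| exact H |exfalso].
  - apply (half_excludes_start i); rewrite E; apply half_contains_walk, H.
  - apply (half_excludes_start j); rewrite <- E; apply half_contains_walk, H.
Qed.

Lemma half_eventually_excludes q : exists n, forall m, n <= m -> ~ half m q.
Proof.
  destruct (classic (exists n, ~ half n q)) as [[n Hn]|Hn].
  - exists n; intros m Hm H; apply Hn, half_antitone with m; assumption.
  - exfalso; apply (no_descending_walk s q 0 s_step); intros n _.
    apply NNPP; intro; apply Hn; eauto.
Qed.

Lemma half_eventually_excludes_list (Q : list N) :
  exists n, forall m q, n <= m -> In q Q -> ~ half m q.
Proof.
  induction Q as [|q Q [n1 H1]]; [exists 0; intros m q _ []|].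
  destruct (half_eventually_excludes q) as [n2 H2]; exists (n1 + n2).
  intros m q' Hm [<-|Hin]; [apply H2 | apply H1]; auto; lia.
Qed.

Definition slab k (x : N) : Prop := (k = 0 \/ half (pred k) x) /\ ~ half k x.

Lemma slab_disjoint k l x : slab k x -> slab l x -> k = l.
Proof.
  assert (K : forall k l, k < l -> slab k x -> slab l x -> False).
  { intros k' l' Hlt [_ Hk] [[E|Hl] _]; [lia|].
    apply Hk, half_antitone with (pred l'); [lia | exact Hl]. }
  intros Hk Hl; destruct (lt_eq_lt_dec k l) as [[H|H]|H];
    [exfalso; eapply K | | exfalso; eapply K]; eauto.
Qed.
End HalfTrees.

Definition induced (D : N -> Prop) p q := TA p q /\ D p /\ D q.

Lemma region_conn D : region TA D -> forall p q, D p -> D q -> conn (induced D) p q.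
Proof. intros [_ [H _]]; exact H. Qed.

Lemma region_side D a b x : region TA D -> D a -> ~ D b -> D x -> side TA a b a x.
Proof.
  intros HD Ha Hb Hx; apply conn_mono with (induced D); [|apply region_conn; assumption].
  intros p q (Hpq & Hp & Hq); split; [exact Hpq|].
  intro Hi; apply inF_single in Hi as [[-> ->]|[-> ->]]; contradiction.
Qed.

Lemma region_exit_edge D x y : region TA D -> D x -> ~ D y ->
  exists a b, TA a b /\ D a /\ ~ D b /\ side TA a b a x /\ side TA a b b y.
Proof.
  intros HD Hx Hy; induction (clos_rt_rtn1 _ _ _ _ (tree_conn x y)) as [|y z Hyz _ IH]; [tauto|].
  destruct (classic (D y)) as [Dy|Dy].
  - exists y, z; repeat split; auto; [apply region_side with D | apply conn_refl]; assumption.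
  - destruct (IH Dy) as (a & b & Hab & Ha & Hb & Hxa & Hyb).
    exists a, b; repeat split; auto; apply conn_trans with y; [exact Hyb|].
    apply side_step; [exact Hyz|].
    intro Hi; apply inF_single in Hi as [[-> ->]|[-> ->]]; contradiction.
Qed.

Lemma region_eventually D (g : nat -> N) : region TA D ->
  (forall a b, TA a b -> D a -> ~ D b -> exists n, forall i, n <= i -> side TA a b a (g i)) ->
  exists n, forall i, n <= i -> D (g i).
Proof.
  intros HD H; pose proof HD as [[d Hd] [_ [L HL]]].
  destruct (eventually_on_list (fun a b => TA a b /\ D a /\ ~ D b) (fun a b i => side TA a b a (g i)) L)
    as [n Hn]; [intros a b (? & ? & ?); auto|].
  exists n; intros i Hi; apply NNPP; intro Hn'.
  destruct (region_exit_edge D d (g i) HD Hd Hn') as (a & b & Hab & Da & Db & Ha & Hb).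
  exact (side_disjoint a b (g i) Hab (Hn a b (conj Hab (conj Da Db)) (HL a b Hab Da Db) i Hi) Hb).
Qed.

Lemma separate_from_list (Q : list N) t : exists Fe,
  (forall a b, In (a, b) Fe -> TA a b /\ side TA a b a t) /\
  (forall q, In q Q -> q <> t -> ~ conn (del TA Fe) t q).
Proof.
  induction Q as [|q Q IH]; [exists []; split; [intros ? ? [] | intros ? []]|].
  destruct IH as (Fe & H1 & H2); destruct (classic (q = t)) as [<-|E].
  - exists Fe; split; [exact H1|]; intros q' [<-|Hin] Hne; [tauto | auto].
  - destruct (separating_edge _ _ (not_eq_sym E)) as (a & b & Hab & Ha & Hb).
    exists ((a, b) :: Fe); split.
    + intros a' b' [Eq|Hin]; [inversion Eq; subst; split|]; auto.
    + intros q' Hq' Hne Hc.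
      assert (Hsub : forall p, conn (del TA ((a, b) :: Fe)) t p ->
                               side TA a b a p /\ conn (del TA Fe) t p).
      { intros p Hp; split; [apply conn_trans with t; [exact Ha|]|];
          (eapply conn_mono; [|exact Hp]; apply del_antimono; intros u v Hi);
          [apply inF_single in Hi as [[-> ->]|[-> ->]]; [|apply inF_sym]; apply inF_In; simpl; auto|].
        destruct Hi as [Hi|Hi]; [left|right]; simpl; auto. }
      destruct Hq' as [<-|Hin].
      * apply (side_disjoint a b q Hab); [apply Hsub, Hc | exact Hb].
      * exact (H2 q' Hin Hne (proj2 (Hsub _ Hc))).
Qed.

End Tree.

Section Decomposition.
Context {V N : Type} (GA : V -> V -> Prop) (TA : N -> N -> Prop) (part : V -> N).
Hypothesis GA_sym : forall u v, GA u v -> GA v u.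
Hypothesis HT : is_tree TA.
Hypothesis part_surj : forall t, exists v, part v = t.
Hypothesis adhesion : finite_adhesion GA TA part.
Hypothesis blocks : forall u v, part u = part v <-> insep GA u v.
Hypothesis realized : forall t1 t2, TA t1 t2 -> exists u v, part u = t1 /\ part v = t2 /\ GA u v.

Definition covers_adhesion a b (F : list (V * V)) : Prop :=
  forall u v, GA u v -> side TA a b a (part u) -> side TA a b b (part v) -> inF F u v.

Definition orients (r : nat -> V) a b c : Prop := tail_in r (fun v => side TA a b c (part v)).

Lemma covers_adhesion_swap a b F : covers_adhesion a b F -> covers_adhesion b a F.
Proof.
  intros H u v Huv Hu Hv; apply inF_sym, H; [apply GA_sym, Huv | |]; apply side_swap; assumption.
Qed.

Lemma covers_adhesion_mono a b F F' :
  covers_adhesion a b F -> (forall u v, inF F u v -> inF F' u v) -> covers_adhesion a b F'.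
Proof. intros H Hi u v ? ? ?; apply Hi, H; assumption. Qed.

Lemma covers_adhesion_exists a b : TA a b -> exists F, covers_adhesion a b F.
Proof. intro H; destruct (adhesion a b H) as [L HL]; exists L; exact HL. Qed.

Lemma covers_adhesion_list (L : list (N * N)) :
  exists F, forall a b, TA a b -> inF L a b -> covers_adhesion a b F.
Proof.
  induction L as [|[x y] L [F HF]]; [exists []; intros a b _ [[]|[]]|].
  destruct (classic (TA x y)) as [Hxy|Hxy].
  - destruct (covers_adhesion_exists x y Hxy) as [Fx HFx]; exists (F ++ Fx).
    intros a b Hab Hin; apply inF_cons in Hin as [[-> ->]|[[-> ->]|Hin]].
    + eapply covers_adhesion_mono; [exact HFx | apply inF_app_r].
    + apply covers_adhesion_swap; eapply covers_adhesion_mono; [exact HFx | apply inF_app_r].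
    + eapply covers_adhesion_mono; [exact (HF a b Hab Hin) | apply inF_app_l].
  - exists F; intros a b Hab Hin; apply inF_cons in Hin as [[-> ->]|[[-> ->]|Hin]];
      [contradiction | exfalso; apply Hxy, (TA_sym TA HT), Hab | exact (HF a b Hab Hin)].
Qed.

Lemma conn_del_side a b F x y : TA a b -> covers_adhesion a b F ->
  conn (del GA F) x y -> side TA a b (part x) (part y).
Proof.
  intros Hab HF H; induction H as [x y [Hxy Hn]| |]; [|apply conn_refl | eapply conn_trans; eauto].
  destruct (side_cases TA HT a b (part x) Hab) as [Hx|Hx],
    (side_cases TA HT a b (part y) Hab) as [Hy|Hy].
  - apply conn_trans with a; [apply side_sym|]; assumption.
  - exfalso; apply Hn, HF; assumption.
  - exfalso; apply Hn, inF_sym, HF; [apply GA_sym|..]; assumption.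
  - apply conn_trans with b; [apply side_sym|]; assumption.
Qed.

Lemma ray_orients r a b : is_ray GA r -> TA a b -> orients r a b a \/ orients r a b b.
Proof.
  intros Hr Hab; destruct (covers_adhesion_exists a b Hab) as [F HF].
  destruct (ray_tail_conn GA r GA_sym Hr F) as [n Hn].
  destruct (side_cases TA HT a b (part (r n)) Hab) as [H|H]; [left|right]; exists n; intros i Hi;
    (apply conn_trans with (part (r n)); [exact H | apply (conn_del_side a b F); auto]).
Qed.

Lemma orients_transfer r r' a b c : edge_equiv GA r r' -> TA a b -> orients r a b c -> orients r' a b c.
Proof.
  intros He Hab [n0 Hn0]; destruct (covers_adhesion_exists a b Hab) as [F HF].
  destruct (He F) as (n & m & Hnm); exists m; intros j Hj.
  apply conn_trans with (part (r (n + n0))); [apply Hn0; lia|].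
  apply (conn_del_side a b F); [exact Hab | exact HF | apply Hnm; lia].
Qed.

Lemma orients_side r a b c d : orients r a b c -> orients r a b d -> side TA a b c d.
Proof.
  intros Hc Hd; destruct (tail_common r _ _ Hc Hd) as [v [Hv1 Hv2]].
  apply conn_trans with (part v); [exact Hv1 | apply side_sym; assumption].
Qed.

Lemma same_part_conn u v F : part u = part v -> conn (del GA F) u v.
Proof. intro E; apply blocks in E; apply E. Qed.

Lemma dominates_orients r u : edge_dominates GA u r -> forall a b, TA a b -> orients r a b (part u).
Proof.
  intros Hd a b Hab; destruct (covers_adhesion_exists a b Hab) as [F HF].
  destruct (Hd F) as [n Hn]; exists n; intros i Hi; apply (conn_del_side a b F); auto.
Qed.

Lemma dominators_same_part r u v : edge_dominates GA u r -> edge_dominates GA v r -> part u = part v.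
Proof.
  intros Hu Hv; apply NNPP; intro Hne.
  destruct (separating_edge TA HT _ _ Hne) as (a & b & Hab & Ha & Hb).
  apply (side_disjoint TA HT a b (part v) Hab); [|exact Hb].
  apply conn_trans with (part u); [exact Ha|].
  apply orients_side with r; apply dominates_orients; assumption.
Qed.

Lemma dominates_same_part r u v : edge_dominates GA u r -> part v = part u -> edge_dominates GA v r.
Proof.
  intros Hu E F; destruct (Hu F) as [n Hn]; exists n; intros i Hi.
  apply conn_trans with u; [apply same_part_conn, E | auto].
Qed.

(* Parts are edge-blocks, and every tree edge inside [D] is realized by an edge of [G] with an
   endpoint outside the part [t0], hence not in [F]. *)
Lemma conn_over_subtree D t0 F : region TA D ->
  (forall w w', D (part w) -> part w <> t0 -> ~ inF F w w') ->
  forall x y, D (part x) -> D (part y) -> conn (del GA F) x y.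
Proof.
  intros HD Hno x y Hx Hy.
  enough (K : forall p q, conn (induced TA D) p q ->
            forall x y, part x = p -> part y = q -> conn (del GA F) x y)
    by exact (K _ _ (region_conn TA D HD _ _ Hx Hy) x y eq_refl eq_refl).
  intros p q H; induction H as [p q (Hpq & Dp & Dq)|p|p q z _ IH1 _ IH2]; intros x' y' Ex Ey.
  - destruct (realized _ _ Hpq) as (u & v & Eu & Ev & Huv).
    apply conn_trans with u; [apply same_part_conn; congruence|].
    apply conn_trans with v; [|apply same_part_conn; congruence].
    apply conn_step; split; [exact Huv|]; intro Hin.
    assert (Hne : part u <> part v)
      by (rewrite Eu, Ev; intro E; rewrite E in Hpq; exact (TA_irrefl TA HT _ Hpq)).
    destruct (classic (part u = t0)) as [E0|E0].
    + apply (Hno v u); [rewrite Ev; exact Dq | congruence | apply inF_sym, Hin].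
    + apply (Hno u v); [rewrite Eu; exact Dp | exact E0 | exact Hin].
  - apply same_part_conn; congruence.
  - destruct (part_surj q) as [w Hw]; apply conn_trans with w; [apply IH1 | apply IH2]; auto.
Qed.

Lemma phi_node_tail r t Fe : (forall a b, In (a, b) Fe -> TA a b /\ side TA a b a t) ->
  phi GA TA part r (TNode t) -> tail_in r (fun v => conn (del TA Fe) t (part v)).
Proof.
  intros HFe Hphi.
  destruct (eventually_on_list (fun a b => In (a, b) Fe) (fun a b i => side TA a b t (part (r i))) Fe)
    as [n Hn]; [intros a b Hin; apply (Hphi a b), HFe, Hin|].
  exists n; intros i Hi; apply NNPP; intro Hc.
  destruct (separating_edge_in TA HT Fe t (part (r i)) Hc) as (a & b & Hab & [Hin|Hin] & Ha & Hb).
  - apply (side_disjoint TA HT a b (part (r i)) Hab); [|exact Hb].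
    apply conn_trans with t; [exact Ha | apply Hn; [exact Hin | apply inF_In, Hin | exact Hi]].
  - apply (side_disjoint TA HT a b t Hab); [exact Ha|].
    apply side_swap, (HFe b a Hin).
Qed.

Lemma phi_node_dominated r t u : phi GA TA part r (TNode t) -> part u = t -> edge_dominates GA u r.
Proof.
  intros Hphi Eu F.
  destruct (separate_from_list TA HT (map part (endpoints F)) t) as (Fe & H1 & H2).
  destruct (phi_node_tail r t Fe H1 Hphi) as [n Hn]; exists n; intros i Hi.
  apply (conn_over_subtree (conn (del TA Fe) t) t F).
  - apply component_region, (TA_sym TA HT).
  - intros w w' Hw Hne Hin; apply (H2 (part w)); [|assumption..].
    apply in_map, (endpoints_inF F w w' Hin).
  - rewrite Eu; apply conn_refl.
  - apply Hn, Hi.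
Qed.

Lemma phi_node_unique r r' t t' : edge_equiv GA r r' ->
  phi GA TA part r (TNode t) -> phi GA TA part r' (TNode t') -> t = t'.
Proof.
  intros He H1 H2; apply NNPP; intro Hne.
  destruct (separating_edge TA HT _ _ Hne) as (a & b & Hab & Ha & Hb).
  apply (side_disjoint TA HT a b t' Hab); [|exact Hb].
  apply conn_trans with t; [exact Ha|].
  apply orients_side with r'; [apply orients_transfer with r; [exact He | exact Hab | apply H1, Hab]|].
  apply H2, Hab.
Qed.

Lemma half_orients s r n : phi GA TA part r (TEnd s) -> orients r (s n) (s (S n)) (s (S n)).
Proof.
  intros [Hs Hphi]; apply (Hphi _ _ (proj2 Hs n)); exists (S n); intros i Hi.
  apply (half_contains_walk TA HT s (proj2 Hs) (ray_nonbacktracking TA s Hs)); lia.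
Qed.

Lemma phi_node_end_disjoint r r' t s : edge_equiv GA r r' ->
  phi GA TA part r (TNode t) -> ~ phi GA TA part r' (TEnd s).
Proof.
  intros He H1 H2; apply (no_descending_walk TA HT s t 0 (proj2 (proj1 H2))); intros n _.
  apply orients_side with r; [|apply H1, (proj2 (proj1 H2))].
  apply orients_transfer with r'; [apply edge_equiv_sym, He | apply (proj2 (proj1 H2)) |];
    [assumption | apply half_orients, H2].
Qed.

Lemma phi_end_orients r s a b c : phi GA TA part r (TEnd s) -> TA a b ->
  orients r a b c -> tail_in s (side TA a b c).
Proof.
  intros [Hs Hphi] Hab Hr.
  destruct (tree_ray_side TA HT s a b Hs Hab) as [Hx|Hx];
    (eapply tail_mono; [|exact Hx]; intros v Hv; eapply conn_trans; [|exact Hv];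
     apply orients_side with r; [exact Hr | exact (Hphi a b Hab _ Hx)]).
Qed.

Lemma phi_end_unique r r' s s' : edge_equiv GA r r' ->
  phi GA TA part r (TEnd s) -> phi GA TA part r' (TEnd s') -> edge_equiv TA s s'.
Proof.
  intros He H1 H2 F.
  destruct (eventually_on_list TA
    (fun a b n => forall i j, n <= i -> n <= j -> side TA a b (s i) (s' j)) F) as [n Hn].
  { intros a b Hab.
    assert (Hc : exists c, tail_in s (side TA a b c)) by
      (destruct (tree_ray_side TA HT s a b (proj1 H1) Hab); eauto).
    destruct Hc as [c [n1 Hn1]].
    destruct (phi_end_orients r' s' a b c H2 Hab) as [n2 Hn2].
    { apply orients_transfer with r; [exact He | exact Hab|].
      apply (proj2 H1 a b Hab c); exists n1; exact Hn1. }
    exists (n1 + n2); intros k Hk i j Hi Hj.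
    apply conn_trans with c; [apply (side_sym TA HT), Hn1 | apply Hn2]; lia. }
  exists n, n; intros i j Hi Hj; apply NNPP; intro Hc.
  destruct (separating_edge_in TA HT F _ _ Hc) as (a & b & Hab & Hin & Ha & Hb).
  apply (side_disjoint TA HT a b (s' j) Hab); [|exact Hb].
  apply conn_trans with (s i); [exact Ha | apply (Hn a b Hab Hin n); auto].
Qed.

Lemma phi_node_injective r r' t :
  phi GA TA part r (TNode t) -> phi GA TA part r' (TNode t) -> edge_equiv GA r r'.
Proof.
  intros H1 H2 F; destruct (part_surj t) as [u Hu].
  destruct (phi_node_dominated r t u H1 Hu F) as [n1 Hn1],
    (phi_node_dominated r' t u H2 Hu F) as [n2 Hn2].
  exists n1, n2; intros i j Hi Hj.
  apply conn_trans with u; [apply conn_sym; [apply del_sym, GA_sym | apply Hn1, Hi] | apply Hn2, Hj].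
Qed.

Lemma phi_end_injective r r' s s' : phi GA TA part r (TEnd s) -> phi GA TA part r' (TEnd s') ->
  edge_equiv TA s s' -> edge_equiv GA r r'.
Proof.
  intros H1 H2 He F; pose proof (proj1 H1) as Hs.
  destruct (half_eventually_excludes_list TA HT s (proj2 Hs) (ray_nonbacktracking TA s Hs)
    (map part (endpoints F))) as [n Hn].
  assert (Hs' : tail_in s' (half TA s n)).
  { destruct (He [(s n, s (S n))]) as (n1 & m1 & Hnm); exists m1; intros j Hj.
    apply conn_trans with (s (S n + n1)); [|apply Hnm; lia].
    apply (half_contains_walk TA HT s (proj2 Hs) (ray_nonbacktracking TA s Hs)); lia. }
  destruct (half_orients s r n H1) as [k1 Hk1], (proj2 H2 _ _ (proj2 Hs n) _ Hs') as [k2 Hk2].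
  exists k1, k2; intros i j Hi Hj; apply (conn_over_subtree (half TA s n) (s n) F).
  - apply component_region, (TA_sym TA HT).
  - intros w w' Hw _ Hin; apply (Hn n (part w)); [lia | | exact Hw].
    apply in_map, (endpoints_inF F w w' Hin).
  - apply Hk1, Hi.
  - apply Hk2, Hj.
Qed.

(* A half-tree avoiding [a] and [b] lies on one side of [ab]; this is how a walk in [T]
   converging to an end decides the orientation of every edge. *)
Lemma phi_end_of_halves r s : is_ray TA s ->
  (forall n, tail_in r (fun v => half TA s n (part v))) -> phi GA TA part r (TEnd s).
Proof.
  intros Hs Hr; split; [exact Hs|]; intros a b Hab u [n0 Hu].
  destruct (half_eventually_excludes_list TA HT s (proj2 Hs) (ray_nonbacktracking TA s Hs) [a; b])
    as [n1 Hn1].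
  set (m := n0 + n1).
  apply (tail_mono r (fun v => half TA s m (part v))); [|apply Hr]; intros v Hv.
  apply conn_trans with (s (S m)); [apply Hu; lia|].
  apply (component_side _ _ _ _ _ _ (Hn1 m a ltac:(lia) ltac:(simpl; auto))
                                    (Hn1 m b ltac:(lia) ltac:(simpl; auto)) Hv).
Qed.

Lemma orients_away_neighbour r n x a b : is_ray GA r -> walk TA n x a -> TA a b ->
  side TA a b a x -> orients r a b b -> exists y, TA x y /\ orients r x y y.
Proof.
  intro Hr; revert x a b; induction n as [n IH] using lt_wf_ind; intros x a b Hw Hab Hx Ht.
  destruct n as [|n]; [inversion Hw; subst; exists b; auto|].
  destruct (walk_snoc TA n x a Hw) as (c & Hwc & Hca).
  destruct (ray_orients r c a Hr Hca) as [Tc|Ta].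
  - destruct (side_cases TA HT a b c Hab) as [Hac|Hbc].
    + exfalso; destruct (tail_common r _ _ Tc Ht) as [v [Hv1 Hv2]].
      destruct (conn_crossing TA HT (del TA [(c, a)]) a b c (part v)) as [K _];
        [intros; eapply del_sub; eauto | assumption..|].
      exact (side_bridge TA HT c a Hca K).
    + destruct (walk_crossing TA HT a b n x c Hab Hwc Hx Hbc) as (m1 & _ & Hm1 & _ & Hw1 & _).
      apply (IH m1 ltac:(lia) x a b); assumption.
  - destruct (side_cases TA HT c a x Hca) as [Hcx|Hax]; [apply (IH n ltac:(lia) x c a); assumption|].
    destruct (walk_crossing TA HT a c n x c (TA_sym TA HT _ _ Hca) Hwc) as (m1 & _ & Hm1 & _ & Hw1 & _);
      [apply side_swap, Hax | apply conn_refl |].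
    apply (IH m1 ltac:(lia) x a b); assumption.
Qed.

Lemma no_sink_out_edge r : is_ray GA r -> ~ (exists t, phi GA TA part r (TNode t)) ->
  forall x, exists y, TA x y /\ orients r x y y.
Proof.
  intros Hr Hn x.
  assert (K : forall a b, TA a b -> side TA a b a x -> ~ orients r a b x ->
                exists y, TA x y /\ orients r x y y).
  { intros a b Hab Hx Hno; destruct (ray_orients r a b Hr Hab) as [T|T].
    - exfalso; apply Hno; eapply tail_mono; [|exact T]; intros v Hv.
      apply conn_trans with a; [apply (side_sym TA HT), Hx | exact Hv].
    - destruct (conn_walk _ _ _ (tree_conn TA HT x a)) as [m Hm].
      exact (orients_away_neighbour r m x a b Hr Hm Hab Hx T). }
  apply NNPP; intro Hy; apply Hn; exists x; intros a b Hab; apply NNPP; intro Hno.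
  destruct (side_cases TA HT a b x Hab) as [Hx|Hx].
  - exact (Hy (K a b Hab Hx Hno)).
  - apply Hy, (K b a (TA_sym TA HT _ _ Hab) (side_swap TA _ _ _ _ Hx)); intro Ho; apply Hno.
    eapply tail_mono; [|exact Ho]; intros v; apply side_swap.
Qed.

Lemma phi_exists r : is_ray GA r -> exists p, phi GA TA part r p.
Proof.
  intro Hr; destruct (classic (exists t, phi GA TA part r (TNode t))) as [[t Ht]|Hn]; [eauto|].
  destruct (choice _ (no_sink_out_edge r Hr Hn)) as [f Hf].
  set (s := fun n => Nat.iter n f (part (r 0))).
  assert (Hstep : forall n, TA (s n) (s (S n))) by (intro n; apply Hf).
  assert (Horient : forall n, orients r (s n) (s (S n)) (s (S n))) by (intro n; apply Hf).
  assert (Hnb : forall n, s (S (S n)) <> s n).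
  { intros n E; apply (side_bridge TA HT _ _ (Hstep n)), orients_side with r; [|apply Horient].
    pose proof (Horient (S n)) as T; rewrite E in T.
    eapply tail_mono; [|exact T]; intros v; apply side_swap. }
  exists (TEnd s); apply phi_end_of_halves; [|exact Horient].
  split; [exact (nonbacktracking_injective TA HT s Hstep Hnb) | exact Hstep].
Qed.

Lemma phi_tail_in_region D r p : region TA D -> phi GA TA part r p -> in_norm TA D p ->
  tail_in r (fun v => D (part v)).
Proof.
  intros HD Hphi Hp.
  destruct (region_eventually TA HT D (fun i => part (r i)) HD) as [n Hn]; [|exists n; exact Hn].
  intros a b Hab Da Db; destruct p as [t|s]; simpl in Hp, Hphi.
  - destruct (Hphi a b Hab) as [n Hn]; exists n; intros i Hi.
    apply conn_trans with t; [apply (region_side TA D a b t HD) | apply Hn]; assumption.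
  - destruct Hp as (s1 & Hs1 & He & Hin), (He [(a, b)]) as (n & m & Hnm).
    apply (proj2 Hphi a b Hab a); exists n; intros i Hi.
    apply conn_trans with (s1 m); [apply (region_side TA D a b); auto|].
    apply (side_sym TA HT), Hnm; lia.
Qed.

Lemma region_adhesion_cover D : region TA D ->
  exists F, forall x y, D (part x) -> conn (del GA F) x y -> D (part y).
Proof.
  intros HD; pose proof HD as [_ [_ [L HL]]].
  destruct (covers_adhesion_list L) as [F HF]; exists F.
  intros x y Hx H; induction H as [x y [Hxy Hn]| |]; auto.
  apply NNPP; intro Dy.
  destruct (region_exit_edge TA HT D _ _ HD Hx Dy) as (a & b & Hab & Da & Db & Ha & Hb).
  exact (Hn (HF a b Hab (HL a b Hab Da Db) x y Hxy Ha Hb)).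
Qed.

Lemma phi_in_norm D r s p : region TA D -> edge_equiv GA r s -> (forall n, D (part (s n))) ->
  phi GA TA part r p -> in_norm TA D p.
Proof.
  intros HD He Hs Hphi.
  assert (Hin : forall a b, TA a b -> D a -> ~ D b -> orients r a b b -> False).
  { intros a b Hab Da Db T; destruct (orients_transfer r s a b b He Hab T) as [n Hn].
    apply (side_disjoint TA HT a b (part (s n)) Hab);
      [apply (region_side TA D a b); auto | apply Hn; auto]. }
  destruct p as [t|s']; simpl.
  - apply NNPP; intro Dt.
    destruct (region_exit_edge TA HT D _ _ HD (Hs 0) Dt) as (a & b & Hab & Da & Db & Ha & Hb).
    apply (Hin a b Hab Da Db); eapply tail_mono; [|apply (Hphi a b Hab)].
    intros v Hv; apply conn_trans with t; assumption.
  - destruct (region_eventually TA HT D s' HD) as [n Hn].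
    + intros a b Hab Da Db.
      destruct (tree_ray_side TA HT s' a b (proj1 Hphi) Hab) as [T|T]; [exact T|].
      exfalso; apply (Hin a b Hab Da Db), (proj2 Hphi a b Hab b T).
    + apply tail_in_OmegaE; [apply (TA_sym TA HT) | apply Hphi | exists n; exact Hn].
Qed.

Lemma phi_continuous r p D : is_ray GA r -> phi GA TA part r p -> region TA D -> in_norm TA D p ->
  exists C, region GA C /\ in_OmegaE GA C r /\
    forall r' p', is_ray GA r' -> in_OmegaE GA C r' -> phi GA TA part r' p' -> in_norm TA D p'.
Proof.
  intros Hr Hphi HD Hp.
  destruct (phi_tail_in_region D r p HD Hphi Hp) as [n1 Hn1].
  destruct (region_adhesion_cover D HD) as [F HF].
  destruct (ray_tail_conn GA r GA_sym Hr F) as [n2 Hn2].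
  exists (conn (del GA F) (r (n1 + n2))); split; [apply component_region, GA_sym|split].
  - apply tail_in_OmegaE; [exact GA_sym | exact Hr |]; exists (n1 + n2); intros i Hi; apply Hn2; lia.
  - intros r' p' _ (s' & _ & He' & Hs') Hphi'.
    apply (phi_in_norm D r' s'); [exact HD | exact He' | | exact Hphi'].
    intro n; apply (HF (r (n1 + n2))); [apply Hn1; lia | apply Hs'].
Qed.

Section Openness.
Variable C : V -> Prop.
Variable LC : list (V * V).
Hypothesis LC_boundary : forall u v, GA u v -> C u -> ~ C v -> inF LC u v.

Lemma open_of_subtree D t0 c : region TA D ->
  (forall w w', D (part w) -> part w <> t0 -> ~ inF LC w w') -> C c -> D (part c) ->
  forall r' p', is_ray GA r' -> phi GA TA part r' p' -> in_norm TA D p' -> in_OmegaE GA C r'.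
Proof.
  intros HD Hno Cc Dc r' p' Hr' Hphi' Hp'.
  apply tail_in_OmegaE; [exact GA_sym | exact Hr' |].
  eapply tail_mono; [|exact (phi_tail_in_region D r' p' HD Hphi' Hp')]; intros w Dw.
  apply (conn_del_boundary GA C LC c w LC_boundary Cc).
  exact (conn_over_subtree D t0 LC HD Hno c w Dc Dw).
Qed.

Lemma open_node r t : phi GA TA part r (TNode t) -> in_OmegaE GA C r -> exists D c,
  region TA D /\ D t /\ (forall w w', D (part w) -> part w <> t -> ~ inF LC w w') /\ C c /\ D (part c).
Proof.
  intros Hphi (sC & _ & HeC & HinC).
  destruct (separate_from_list TA HT (map part (endpoints LC)) t) as (Fe & H1 & H2).
  destruct (part_surj t) as [u Hu].
  exists (conn (del TA Fe) t), u; split; [apply component_region, (TA_sym TA HT)|].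
  split; [apply conn_refl | split; [|split; [|rewrite Hu; apply conn_refl]]].
  - intros w w' Dw Hne Hin; apply (H2 (part w)); [|assumption..].
    apply in_map, (endpoints_inF LC w w' Hin).
  - destruct (phi_node_dominated r t u Hphi Hu LC) as [n Hn], (HeC LC) as (n1 & m1 & Hnm).
    apply (conn_del_boundary GA C LC (sC m1) u LC_boundary (HinC m1)).
    apply conn_trans with (r (n + n1)); apply conn_sym; [apply del_sym, GA_sym | apply Hnm; lia |
      apply del_sym, GA_sym | apply Hn; lia].
Qed.

Lemma open_end r s : phi GA TA part r (TEnd s) -> in_OmegaE GA C r -> exists D c,
  region TA D /\ in_OmegaE TA D s /\ (forall w w', D (part w) -> part w <> s 0 -> ~ inF LC w w') /\
  C c /\ D (part c).
Proof.
  intros Hphi (sC & _ & HeC & HinC); pose proof (proj1 Hphi) as Hs.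
  pose proof (half_contains_walk TA HT s (proj2 Hs) (ray_nonbacktracking TA s Hs)) as Hwalk.
  destruct (half_eventually_excludes_list TA HT s (proj2 Hs) (ray_nonbacktracking TA s Hs)
    (map part (endpoints LC))) as [n Hn].
  destruct (orients_transfer r sC _ _ _ HeC (proj2 Hs n) (half_orients s r n Hphi)) as [k Hk].
  exists (half TA s n), (sC k); split; [apply component_region, (TA_sym TA HT)|split].
  - apply tail_in_OmegaE; [apply (TA_sym TA HT) | exact Hs |].
    exists (S n); intros i Hi; apply Hwalk; lia.
  - split; [|split; [apply HinC | apply Hk; lia]].
    intros w w' Dw _ Hin; apply (Hn n (part w)); [lia | | exact Dw].
    apply in_map, (endpoints_inF LC w w' Hin).
Qed.

End Openness.

Lemma phi_open r p C : is_ray GA r -> phi GA TA part r p -> region GA C -> in_OmegaE GA C r ->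
  exists D, region TA D /\ in_norm TA D p /\
    forall r' p', is_ray GA r' -> phi GA TA part r' p' -> in_norm TA D p' -> in_OmegaE GA C r'.
Proof.
  intros Hr Hphi (_ & _ & LC & HLC) HC.
  destruct p as [t|s].
  - destruct (open_node C LC HLC r t Hphi HC) as (D & c & HD & Dt & Hno & Cc & Dc).
    exists D; split; [exact HD | split; [exact Dt |]].
    exact (open_of_subtree C LC HLC D t c HD Hno Cc Dc).
  - destruct (open_end C LC r s Hphi HC) as (D & c & HD & Ds & Hno & Cc & Dc).
    exists D; split; [exact HD | split; [exact Ds |]].
    exact (open_of_subtree C LC HLC D (s 0) c HD Hno Cc Dc).
Qed.

Lemma conn_del_slab s k F x y : is_ray TA s ->
  (k = 0 \/ covers_adhesion (s (pred k)) (s k) F) -> covers_adhesion (s k) (s (S k)) F ->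
  part x = s k -> conn (del GA F) x y -> slab TA s k (part y).
Proof.
  intros Hs Hprev Hnext Hx Hxy; split.
  - destruct k as [|k]; [left; reflexivity | right; simpl].
    destruct Hprev as [E|Hprev]; [discriminate|].
    pose proof (conn_del_side _ _ F x y (proj2 Hs k) Hprev Hxy) as H; rewrite Hx in H; exact H.
  - intro Hy; apply (side_disjoint TA HT (s k) (s (S k)) (part y) (proj2 Hs k)); [|exact Hy].
    pose proof (conn_del_side _ _ F x y (proj2 Hs k) Hnext Hxy) as H; rewrite Hx in H; exact H.
Qed.

(* The ray of [G] above an end of [T]: in the part [s k] a simple path runs from where the
   realizing edge of [s_(k-1) s_k] arrives to where that of [s_k s_(k+1)] leaves, avoiding both
   adhesion sets, so that it stays in the slab between these two tree edges. *)
Lemma realizing_paths s : is_ray TA s -> exists (len : nat -> nat) (P : nat -> nat -> V),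
  (forall k i, i < len k -> GA (P k i) (P k (S i))) /\
  (forall k, GA (P k (len k)) (P (S k) 0)) /\
  (forall k i, i <= len k -> slab TA s k (part (P k i))) /\
  (forall k i j, i <= len k -> j <= len k -> P k i = P k j -> i = j).
Proof.
  intro Hs; pose proof (proj2 Hs) as Hst.
  destruct (choice (fun k (e : V * V) =>
    part (fst e) = s k /\ part (snd e) = s (S k) /\ GA (fst e) (snd e))) as [e He]; [intro k; destruct (realized _ _ (Hst k)) as (u & v & ?); exists (u, v); exact H|].
  destruct (choice (fun k F => covers_adhesion (s k) (s (S k)) F)) as [Ad HAd];
    [intro k; apply covers_adhesion_exists, Hst|].
  set (z := fun k => match k with 0 => fst (e 0) | S j => snd (e j) end).
  assert (Hz : forall k, part (z k) = s k) by (intros [|j]; apply He).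
  set (F := fun k => Ad (pred k) ++ Ad k).
  destruct (choice (fun k (lf : nat * (nat -> V)) =>
    snd lf 0 = z k /\ snd lf (fst lf) = fst (e k) /\
    (forall i, i < fst lf -> del GA (F k) (snd lf i) (snd lf (S i))) /\
    (forall i j, i <= fst lf -> j <= fst lf -> snd lf i = snd lf j -> i = j))) as [lf Hlf].
  { intro k; destruct (conn_simple_path _ _ _ (same_part_conn (z k) (fst (e k)) (F k)
      (eq_trans (Hz k) (eq_sym (proj1 (He k)))))) as (len & f & ?); exists (len, f); exact H. }
  exists (fun k => fst (lf k)), (fun k => snd (lf k)); split; [|split; [|split]].
  - intros k i Hi; exact (del_sub _ _ _ _ (proj1 (proj2 (proj2 (Hlf k))) i Hi)).
  - intro k; rewrite (proj1 (proj2 (Hlf k))), (proj1 (Hlf (S k))); apply He.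
  - intros k i Hi; apply (conn_del_slab s k (F k) (z k)); [exact Hs | | | apply Hz |].
    + destruct k as [|j]; [left; reflexivity | right].
      eapply covers_adhesion_mono; [apply HAd | apply inF_app_l].
    + eapply covers_adhesion_mono; [apply HAd | apply inF_app_r].
    + rewrite <- (proj1 (Hlf k)); apply conn_path with (i := 0); [|lia].
      intros j Hj; apply (proj1 (proj2 (proj2 (Hlf k)))); lia.
  - intros k; exact (proj2 (proj2 (proj2 (Hlf k)))).
Qed.

Lemma end_preimage s : is_ray TA s ->
  exists r, is_ray GA r /\ ~ edge_dominated GA r /\ phi GA TA part r (TEnd s).
Proof.
  intro Hs; destruct (realizing_paths s Hs) as (len & P & Hin & Hjoin & Hslab & Hsimple).
  destruct (concat_paths GA len P Hin Hjoin) as (r & Hr & Hlate).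
  { intros k l i j Hi Hj E; assert (k = l) as <-;
      [|split; [reflexivity | exact (Hsimple k i j Hi Hj E)]].
    apply (slab_disjoint TA HT s (proj2 Hs) (ray_nonbacktracking TA s Hs) _ _ (part (P k i)));
      [|rewrite E]; apply Hslab; assumption. }
  assert (Hphi : phi GA TA part r (TEnd s)).
  { apply phi_end_of_halves; [exact Hs | intro n].
    destruct (Hlate (S n)) as [n0 Hn0]; exists n0; intros m Hm.
    destruct (Hn0 m Hm) as (k & i & Hk & Hi & ->).
    destruct (Hslab k i Hi) as [[E|Hh] _]; [lia|].
    apply (half_antitone TA HT s (proj2 Hs) (ray_nonbacktracking TA s Hs) n (pred k));
      [lia | exact Hh]. }
  exists r; split; [exact Hr | split; [intros [u Hu] | exact Hphi]].
  apply (phi_node_end_disjoint r r (part u) s (edge_equiv_refl GA r GA_sym Hr)); [|exact Hphi].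
  exact (dominates_orients r u Hu).
Qed.

Lemma phi_well_defined r r' p p' : edge_equiv GA r r' ->
  phi GA TA part r p -> phi GA TA part r' p' -> peq TA p p'.
Proof.
  intros He H1 H2; destruct p as [t|s], p' as [t'|s']; simpl.
  - exact (phi_node_unique r r' t t' He H1 H2).
  - exact (phi_node_end_disjoint r r' t s' He H1 H2).
  - exact (phi_node_end_disjoint r' r t' s (edge_equiv_sym GA r r' GA_sym He) H2 H1).
  - exact (phi_end_unique r r' s s' He H1 H2).
Qed.

Lemma phi_injective r r' p p' : phi GA TA part r p -> phi GA TA part r' p' ->
  peq TA p p' -> edge_equiv GA r r'.
Proof.
  intros H1 H2 Hp; destruct p as [t|s], p' as [t'|s']; simpl in Hp; try contradiction.
  - subst t'; exact (phi_node_injective r r' t H1 H2).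
  - exact (phi_end_injective r r' s s' H1 H2 Hp).
Qed.

Lemma phi_undominated r p : ~ edge_dominated GA r -> phi GA TA part r p -> exists s, p = TEnd s.
Proof.
  intros Hnd Hphi; destruct p as [t|s]; [exfalso | eauto].
  destruct (part_surj t) as [u Hu]; exact (Hnd (ex_intro _ u (phi_node_dominated r t u Hphi Hu))).
Qed.

Lemma phi_dominated r : edge_dominated GA r ->
  exists t, phi GA TA part r (TNode t) /\ forall v, part v = t <-> edge_dominates GA v r.
Proof.
  intros [u Hu]; exists (part u); split; [exact (dominates_orients r u Hu)|].
  intro v; split; [apply dominates_same_part, Hu | intro Hv; exact (dominators_same_part r v u Hv Hu)].
Qed.

End Decomposition.

Theorem theorem3p1 (V N : Type) (GA : V -> V -> Prop) (TA : N -> N -> Prop)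
  (part : V -> N) :
  is_graph GA -> connected_graph GA ->
  tree_cut_decomposition TA part ->
  finite_adhesion GA TA part ->
  (forall u v, part u = part v <-> insep GA u v) ->
  (forall t1 t2, TA t1 t2 -> exists u v, part u = t1 /\ part v = t2 /\ GA u v) ->
  topological_embedding GA TA (phi GA TA part) /\
  ((forall r p, is_ray GA r -> ~ edge_dominated GA r -> phi GA TA part r p ->
      exists s, p = TEnd s) /\
   (forall s, is_ray TA s -> exists r, is_ray GA r /\ ~ edge_dominated GA r /\
      phi GA TA part r (TEnd s))) /\
  (forall r, is_ray GA r -> edge_dominated GA r ->
     exists t, phi GA TA part r (TNode t) /\
       forall v, part v = t <-> edge_dominates GA v r).
Proof.
  intros [GA_sym _] _ [HT part_surj] adhesion blocks realized.
  split; [split; [|split; [|split; [|split]]] | split; [split|]].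
  - intros r Hr; apply (phi_exists GA TA part); assumption.
  - intros r r' p p' _ _; apply (phi_well_defined GA TA part); assumption.
  - intros r r' p p' _ _; apply (phi_injective GA TA part); assumption.
  - intros r p Hr Hphi D HD; apply (phi_continuous GA TA part); assumption.
  - intros r p Hr Hphi C HC; apply (phi_open GA TA part); assumption.
  - intros r p _; apply (phi_undominated GA TA part); assumption.
  - apply (end_preimage GA TA part); assumption.
  - intros r _; apply (phi_dominated GA TA part); assumption.
Qed.
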